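(* There exist absolute constants $c, C > 0$ and $m_0$ such that the following holds for every integer $m \geq m_0$. Let $s = \lceil \log_2 m \rceil + 2$, $k = m^2 s$, $n = km$, and let $\mathcal{F} \subset \mathcal{P}([n])$ be constructed as follows: partition $[n]$ into blocks $B_1,\ldots,B_m$ with $|B_i| = k$, choose $T_i \subset B_i$ with $|T_i| = s$, put $T = \bigcup_i T_i$, and let $\mathcal{F}$ be the union-closed family generated by $\{B_i \cup \{t\} : i \in [m],\ t \in T\}$. Let $\mathcal{F}' = \mathcal{F} \cup \{[n]\setminus\{j\} : j \in [n]\}$. Then $\mathcal{F}'$ is union-closed, $\mathcal{F}'$ separates the points of $[n]$, and $$c\,\frac{\log_2\log_2|\mathcal{F}'|}{\log_2|\mathcal{F}'|} \leq \mathrm{AOD}(\mathcal{F}') \leq C\,\frac{\log_2\log_2|\mathcal{F}'|}{\log_2|\mathcal{F}'|}.$$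
   Context: $[n] = \{1,\ldots,n\}$. A family of sets is union-closed if it contains the union of any two of its members; the union-closed family generated by $\mathcal{G}$ is the smallest union-closed family containing $\mathcal{G}$. A family $\mathcal{F} \subset \mathcal{P}([n])$ separates the points of $[n]$ if for all $i \neq j$ in $[n]$ there is $A \in \mathcal{F}$ with $|A \cap \{i,j\}| = 1$. For a finite nonempty family $\mathcal{F} \subset \mathcal{P}(X)$ and $x \in X$, the abundance is $\gamma_x = |\{A \in \mathcal{F} : x \in A\}|/|\mathcal{F}|$. For $\mathcal{F} \neq \emptyset,\{\emptyset\}$, the average overlap density is $\mathrm{AOD}(\mathcal{F}) = \frac{1}{|\mathcal{F}\setminus\{\emptyset\}|}\sum_{A \in \mathcal{F}\setminus\{\emptyset\}} \frac{1}{|A|}\sum_{x \in A}\gamma_x$. *)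

From HB Require Import structures.
From mathcomp Require Import all_boot all_order all_algebra.
From mathcomp Require Import all_classical all_reals all_analysis.
Set Implicit Arguments. Unset Strict Implicit. Unset Printing Implicit Defensive.
Import Order.TTheory GRing.Theory Num.Theory.
Local Open Scope ring_scope.

Definition union_closed (T : finType) (F : {set {set T}}) : bool :=
  [forall A in F, forall B in F, (A :|: B) \in F].

Definition uc_gen (T : finType) (G : {set {set T}}) : {set {set T}} :=
  \bigcap_(H : {set {set T}} | union_closed H && (G \subset H)) H.

Definition separates (T : finType) (F : {set {set T}}) : Prop :=
  forall i j : T, i != j -> exists2 A, A \in F & #|A :&: [set i; j]| = 1%N.

Definition abundance (R : realFieldType) (T : finType) (F : {set {set T}}) (x : T) : R :=
  (#|[set A in F | x \in A]|%:R) / (#|F|%:R).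

Definition AOD (R : realFieldType) (T : finType) (F : {set {set T}}) : R :=
  (#|F :\ (finset.set0 : {set T})|%:R)^-1 *
  \sum_(A in F :\ (finset.set0 : {set T})) ((#|A|%:R)^-1 * \sum_(x in A) abundance R F x).

Definition log2 (R : realType) (x : R) : R := ln x / ln 2.

From HB Require Import structures.
From mathcomp Require Import all_boot all_order all_algebra.
From mathcomp Require Import all_classical all_reals all_analysis.
From mathcomp Require Import zify.
From mathcomp.algebra_tactics Require Import lra.
Set Implicit Arguments. Unset Strict Implicit. Unset Printing Implicit Defensive.
Import Order.TTheory GRing.Theory Num.Theory.
(* Give the finite-set lemmas precedence over their homonyms on classical sets. *)
Import fintype finset.

(* Every set of [F] is "admissible": it contains a whole block and meets the other
   blocks only in marked points.  Hence a set of [F'] has at most a [1/m]-fraction of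
   marked points, and an unmarked point of block [j] lies exactly in the sets of [F]
   containing [B j] (plus coatoms).  Counting the "layers" [B j ∪ S] ([S] marked,
   outside [B j]) from below and the traces on the blocks from above gives
   [m 2^(s(m-1)) <= |F'| <= (2^s+1)^m + km] and puts the abundance of every unmarked
   point between [2^(s(m-1))/|F'|] and [((2^s+1)^(m-1) + km)/|F'|].  Averaging, the
   AOD of [F'] is [Θ(1/m)].  Finally, with [s = ceil(log2 m) + 2] one has [2^s = Θ(m)],
   so [log2 |F'| = Θ(m log m)] and [log2 log2 |F'| = Θ(log m)]: the ratio
   [log2 log2 |F'| / log2 |F'|] is also [Θ(1/m)], which gives the theorem. *)

Lemma union_closedP (T : finType) (F : {set {set T}}) :
  reflect (forall A B, A \in F -> B \in F -> A :|: B \in F) (union_closed F).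
Proof.
apply: (iffP forallP) => [H A B hA hB | H A].
  by have /forall_inP := implyP (H A) hA; apply.
by apply/implyP => hA; apply/forall_inP => B hB; apply: H.
Qed.

Lemma uc_gen_closed (T : finType) (G : {set {set T}}) : union_closed (uc_gen G).
Proof.
apply/union_closedP => A B /bigcapP hA /bigcapP hB; apply/bigcapP => H hH.
have /andP[/union_closedP uH _] := hH; exact: uH (hA _ hH) (hB _ hH).
Qed.

Lemma uc_gen_min (T : finType) (G H : {set {set T}}) :
  union_closed H -> G \subset H -> uc_gen G \subset H.
Proof. by move=> uH sGH; apply: finset.bigcap_inf; apply/andP. Qed.

Lemma uc_gen_sub (T : finType) (G : {set {set T}}) : G \subset uc_gen G.
Proof. by apply/subsetP => A hA; apply/bigcapP => H /andP[_ /subsetP]; apply. Qed.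

Lemma union_closed_bigcup (T : finType) (I : eqType) (H : {set {set T}})
    (r : seq I) (f : I -> {set T}) (a : {set T}) :
  union_closed H -> a \in H -> (forall i, i \in r -> f i \in H) ->
  a :|: \bigcup_(i <- r) f i \in H.
Proof.
move=> /union_closedP uH ha; elim: r => [|i r IH] hf; first by rewrite big_nil finset.setU0.
rewrite big_cons finset.setUCA; apply: uH; first by apply: hf; rewrite finset.inE eqxx.
by apply: IH => j jr; apply: hf; rewrite finset.inE jr orbT.
Qed.

Lemma card_bigcup_disjoint (I X : finType) (r : seq I) (f : I -> {set X}) :
  uniq r -> (forall i j, i \in r -> j \in r -> i != j -> [disjoint f i & f j]) ->
  #|\bigcup_(i <- r) f i| = \sum_(i <- r) #|f i|.
Proof.
elim: r => [|i r IH]; first by rewrite !big_nil cards0.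
move=> /= /andP[ir ur] hd; rewrite !big_cons cardsU.
rewrite IH //; last by move=> a b ha hb; apply: hd; rewrite finset.inE ?ha ?hb orbT.
suff -> : f i :&: \bigcup_(j <- r) f j = finset.set0 by rewrite cards0 subn0.
apply/setP => x; rewrite !finset.inE finset.bigcup_seq.
apply/negP => /andP[xi /bigcupP[j jr xj]].
have ij : i != j by apply: contraNneq ir => ->.
have := hd i j; rewrite !finset.inE eqxx jr orbT => /(_ erefl erefl ij) /disjointFr /(_ xi).
by rewrite xj.
Qed.

Definition coatoms (X : finType) : {set {set X}} := [set [set: X] :\ j | j : X].

Lemma setU_coatom (X : finType) (A : {set X}) (j : X) :
  A :|: ([set: X] :\ j) = if j \in A then [set: X] else [set: X] :\ j.
Proof.
apply/setP => x; case: (boolP (j \in A)) => jA; rewrite !finset.inE ?andbT.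
  by case: (eqVneq x j) => [->|]; rewrite ?jA ?orbT.
case: (eqVneq x j) => [->|] /=; last by rewrite orbT.
by rewrite orbF; apply/negbTE.
Qed.

Lemma union_closed_coatoms (X : finType) (F : {set {set X}}) :
  union_closed F -> [set: X] \in F -> union_closed (F :|: coatoms X).
Proof.
move=> /union_closedP uF TF.
have hT : [set: X] \in F :|: coatoms X by rewrite finset.inE TF.
have hc j : [set: X] :\ j \in F :|: coatoms X by apply/setUP; right; apply/imsetP; exists j.
have hU A j : A :|: ([set: X] :\ j) \in F :|: coatoms X.
  by rewrite setU_coatom; case: (j \in A).
apply/union_closedP => A A' /setUP[AF|/imsetP[j _ ->]] /setUP[A'F|/imsetP[j' _ ->]].
- by apply/setUP; left; exact: uF.
- exact: hU.
- by rewrite finset.setUC; exact: hU.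
- exact: hU.
Qed.

Lemma separates_coatoms (X : finType) (F : {set {set X}}) : separates (F :|: coatoms X).
Proof.
move=> i j ij; exists ([set: X] :\ i); first by apply/setUP; right; apply/imsetP; exists i.
have -> : ([set: X] :\ i) :&: [set i; j] = [set j].
  apply/setP => x; rewrite !finset.inE; case: (eqVneq x j) => [->|xj].
    by rewrite andbT orbT andbT eq_sym.
  by rewrite orbF andbT andNb.
by rewrite cards1.
Qed.

Lemma card_coatom (X : finType) (j : X) : #|[set: X] :\ j| = #|X|.-1.
Proof. by rewrite -cardsT (cardsD1 j [set: X]) finset.inE. Qed.

Lemma card_coatoms (X : finType) : #|coatoms X| <= #|X|.
Proof. exact: leq_imset_card. Qed.

Local Open Scope ring_scope.

Lemma abundance_ge0 (R : realFieldType) (X : finType) (F : {set {set X}}) (x : X) :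
  0 <= abundance R F x.
Proof. by rewrite /abundance divr_ge0 ?ler0n. Qed.

Lemma abundance_le1 (R : realFieldType) (X : finType) (F : {set {set X}}) (x : X) :
  abundance R F x <= 1.
Proof.
rewrite /abundance; case: (posnP #|F|) => [->|hF]; first by rewrite invr0 mulr0.
rewrite ler_pdivrMr ?ltr0n // mul1r ler_nat; apply: subset_leq_card.
by apply/subsetP => A; rewrite finset.inE => /andP[].
Qed.

(* If at most a [1/m]-fraction of the nonempty set [A] lies in [Tl], and points outside
   [Tl] have abundance in [[lo, hi]], then the mean abundance over [A] lies in
   [[lo/2, 1/m + hi]] (points of [Tl] contribute between 0 and 1 each). *)
Lemma mean_abundance_bounds (R : realFieldType) (X : finType) (F : {set {set X}})
    (Tl A : {set X}) (m : nat) (lo hi : R) :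
  (1 < m)%N -> A != finset.set0 -> (m * #|A :&: Tl| <= #|A|)%N -> 0 <= lo -> 0 <= hi ->
  (forall x, x \notin Tl -> lo <= abundance R F x <= hi) ->
  lo / 2 <= (#|A|%:R)^-1 * \sum_(x in A) abundance R F x <= m%:R^-1 + hi.
Proof.
move=> hm hA hmt hlo hhi hx.
have ha : (0 < #|A|)%N by rewrite card_gt0.
have hta : (#|A :&: Tl| <= #|A|)%N by apply/subset_leq_card/subsetIl.
rewrite (big_setID Tl) /=.
set S1 := \sum_(x in A :&: Tl) _; set S2 := \sum_(x in A :\: Tl) _.
have s1l : 0 <= S1 by apply: sumr_ge0 => x _; apply: abundance_ge0.
have s1u : S1 <= #|A :&: Tl|%:R.
  by rewrite /S1 -sumr_const; apply: ler_sum => x _; apply: abundance_le1.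
have cD : #|A :\: Tl| = (#|A| - #|A :&: Tl|)%N by rewrite cardsD.
have s2l : (#|A|%:R - #|A :&: Tl|%:R) * lo <= S2.
  rewrite -natrB // -cD mulr_natl -sumr_const.
  by apply: ler_sum => x; rewrite finset.inE => /andP[xT _]; case/andP: (hx x xT).
have s2u : S2 <= (#|A|%:R - #|A :&: Tl|%:R) * hi.
  rewrite -natrB // -cD mulr_natl -sumr_const.
  by apply: ler_sum => x; rewrite finset.inE => /andP[xT _]; case/andP: (hx x xT).
have hmt' : m%:R * #|A :&: Tl|%:R <= #|A|%:R :> R by rewrite -natrM ler_nat.
have hm' : 2 <= m%:R :> R by rewrite (ler_nat R 2 m).
have ha' : 0 < #|A|%:R :> R by rewrite ltr0n.
have ht' : 0 <= #|A :&: Tl|%:R :> R by rewrite ler0n.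
set a := #|A|%:R in hmt' ha' s1u s2l s2u *.
set t := #|A :&: Tl|%:R in hmt' ht' s1u s2l s2u *.
set M := m%:R in hmt' hm' *.
have hMt : t <= a / M by rewrite ler_pdivlMr ?(lt_le_trans _ hm') // mulrC.
have h2t : 2 * t <= a by nra.
apply/andP; split.
  rewrite [X in _ <= X]mulrC ler_pdivlMr //; nra.
rewrite [X in X <= _]mulrC ler_pdivrMr //.
have : a / M = M^-1 * a by rewrite mulrC.
nra.
Qed.

Lemma AOD_between (R : realFieldType) (X : finType) (F : {set {set X}}) (lo hi : R) :
  (0 < #|F|)%N -> finset.set0 \notin F ->
  (forall A, A \in F -> lo <= (#|A|%:R)^-1 * \sum_(x in A) abundance R F x <= hi) ->
  lo <= AOD R F <= hi.
Proof.
move=> hF h0 hA; rewrite /AOD.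
have -> : F :\ finset.set0 = F.
  apply/setP => A; rewrite !finset.inE.
  by case: (eqVneq A finset.set0) => // ->; rewrite (negbTE h0).
have hF' : 0 < #|F|%:R :> R by rewrite ltr0n.
apply/andP; split.
  rewrite mulrC ler_pdivlMr // mulr_natr -sumr_const.
  by apply: ler_sum => A /hA /andP[].
rewrite mulrC ler_pdivrMr // mulr_natr -sumr_const.
by apply: ler_sum => A /hA /andP[].
Qed.

Local Close Scope ring_scope.

(* The key invariant is [admissible]: a set of [F] contains a whole block, and
   meets every other block only in its marked points. *)
Section BlockConstruction.
Variables (X : finType) (m k s : nat) (B T : 'I_m -> {set X}).
Hypothesis card_B : forall i, #|B i| = k.
Hypothesis disjoint_B : forall i j, i != j -> [disjoint B i & B j].
Hypothesis cover_B : \bigcup_i B i = [set: X].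
Hypothesis T_sub_B : forall i, T i \subset B i.
Hypothesis card_T : forall i, #|T i| = s.
Hypothesis s_gt0 : 0 < s.
Hypothesis s_lt_k : s < k.

Let Tall := \bigcup_i T i.
Let G := [set B i :|: [set t] | i in [set: 'I_m], t in Tall].
Let F := uc_gen G.

Lemma block_of x : exists i, x \in B i.
Proof.
have : x \in \bigcup_i B i by rewrite cover_B finset.inE.
by case/bigcupP => i _ xi; exists i.
Qed.

Lemma block_unique i j x : x \in B i -> x \in B j -> i = j.
Proof.
move=> xi xj; apply/eqP; apply/negPn/negP => /disjoint_B /disjointFr /(_ xi).
by rewrite xj.
Qed.

Lemma marked_in_block x j : x \in Tall -> x \in B j -> x \in T j.
Proof.
case/bigcupP => i _ xTi xj.
by have := block_unique (subsetP (T_sub_B i) _ xTi) xj => <-.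
Qed.

Lemma T_sub_Tall j : T j \subset Tall.
Proof. exact: (finset.bigcup_sup j). Qed.

Lemma card_Tall : #|Tall| = m * s.
Proof.
rewrite /Tall card_bigcup_disjoint ?index_enum_uniq //.
  by rewrite (eq_bigr (fun=> s)) // sum_nat_const card_ord.
move=> i j _ _ /disjoint_B h.
by apply: disjointWl (T_sub_B i) _; apply: disjointWr (T_sub_B j) _.
Qed.

Definition admissible (A : {set X}) : bool :=
  [exists i, B i \subset A] && [forall j, (B j \subset A) || (A :&: B j \subset T j)].

Lemma admissible_closed : union_closed [set A | admissible A].
Proof.
apply/union_closedP => A A'; rewrite !finset.inE.
move=> /andP[/existsP[i hi] /forallP hA] /andP[_ /forallP hA'].
apply/andP; split.
  by apply/existsP; exists i; apply: subset_trans hi (finset.subsetUl _ _).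
apply/forallP => j; case/orP: (hA j) => [h|h].
  by rewrite (subset_trans h (finset.subsetUl _ _)).
case/orP: (hA' j) => [h'|h']; first by rewrite (subset_trans h' (finset.subsetUr _ _)).
by rewrite finset.setIUl finset.subUset h h' orbT.
Qed.

Lemma generators_admissible : G \subset [set A | admissible A].
Proof.
apply/subsetP => A /imset2P[i t _ tT ->]; rewrite finset.inE; apply/andP; split.
  by apply/existsP; exists i; apply: finset.subsetUl.
apply/forallP => j; case: (eqVneq i j) => [->|ij]; first by rewrite finset.subsetUl.
apply/orP; right; apply/subsetP => x; rewrite !finset.inE => /andP[/orP[xi|/eqP ->] xj].
  by have := block_unique xi xj => eij; rewrite eij eqxx in ij.
exact: marked_in_block.
Qed.

Lemma F_admissible A : A \in F -> admissible A.
Proof.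
move=> AF; have := subsetP (uc_gen_min admissible_closed generators_admissible) A AF.
by rewrite finset.inE.
Qed.

Lemma admissible_unmarked A x j :
  admissible A -> x \in A -> x \notin Tall -> x \in B j -> B j \subset A.
Proof.
move=> /andP[_ /forallP /(_ j) /orP[//|/subsetP h]] xA xT xj.
have := h x; rewrite finset.inE xA xj => /(_ erefl) xTj.
by case/negP: xT; apply/bigcupP; exists j.
Qed.

Lemma admissible_card A : admissible A -> k <= #|A|.
Proof. by case/andP => /existsP[i /subset_leq_card]; rewrite card_B. Qed.

Lemma block_marked_in_F j (S : {set X}) : S \subset Tall -> B j :|: S \in F.
Proof.
move=> sS; have [t0 t0T] : exists t, t \in T j by apply/card_gt0P; rewrite card_T.
have gen t : t \in Tall -> B j :|: [set t] \in F.
  move=> tT; apply: (subsetP (uc_gen_sub G)).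
  by apply/imset2P; exists j t; rewrite ?finset.inE.
have -> : B j :|: S = (B j :|: [set t0]) :|: \bigcup_(t <- enum S) (B j :|: [set t]).
  apply/setP => x; rewrite !finset.inE finset.bigcup_seq; apply/idP/idP.
    case/orP => [->//|xS]; apply/orP; right; apply/bigcupP; exists x.
      by rewrite mem_enum.
    by rewrite !finset.inE eqxx orbT.
  case/orP => [/orP[->//|/eqP ->]|/bigcupP[t tS]]; first by rewrite (subsetP (T_sub_B j)).
  by rewrite !finset.inE => /orP[->//|/eqP ->]; rewrite mem_enum in tS; rewrite tS orbT.
apply: union_closed_bigcup (uc_gen_closed G) _ _; first by apply/gen/(subsetP (T_sub_Tall j)).
by move=> t; rewrite mem_enum => tS; apply/gen/(subsetP sS).
Qed.

Lemma setT_in_F : 0 < m -> [set: X] \in F.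
Proof.
move=> m_gt0; have B_F j : B j \in F.
  by have := block_marked_in_F j (finset.sub0set Tall); rewrite finset.setU0.
have := union_closed_bigcup (r := index_enum 'I_m) (uc_gen_closed G)
  (B_F (Ordinal m_gt0)) (fun i _ => B_F i).
by rewrite cover_B finset.setUT.
Qed.

(* Lower bound: the "layer" of block [j] consists of [B j] plus any set of marked points
   of the other blocks; it has [2^(s(m-1))] members. *)
Definition layer (j : 'I_m) : {set {set X}} := [set B j :|: S | S in powerset (Tall :\: T j)].

Lemma card_layer j : #|layer j| = 2 ^ (s * m.-1).
Proof.
rewrite card_in_imset ?card_powerset.
  rewrite cardsD (finset.setIidPr (T_sub_Tall j)) card_Tall card_T.
  by rewrite mulnC -[X in _ - X]muln1 -mulnBr subn1.
have recover (U : {set X}) : U \subset Tall :\: T j -> (B j :|: U) :\: B j = U.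
  move=> sU; apply/setP => x; rewrite !finset.inE.
  case: (boolP (x \in U)) => xU; last by rewrite orbF andNb.
  have /setDP[xT xTj] := subsetP sU x xU.
  by rewrite orbT andbT; apply/negP => xB; case/negP: xTj; apply: marked_in_block.
move=> S S'; rewrite !finset.inE => sS sS' e.
by rewrite -(recover _ sS) -(recover _ sS') e.
Qed.

(* Layers lie in [F], and a set of the layer of [j] contains no other block [B i]
   (as [|B i| = k > s = |T i|]); so distinct layers are disjoint. *)
Lemma layer_sub_F j : layer j \subset F.
Proof.
apply/subsetP => A /imsetP[S]; rewrite finset.inE => sS ->; apply: block_marked_in_F.
exact: subset_trans sS (subsetDl _ _).
Qed.

Lemma layer_block j A i : A \in layer j -> B i \subset A -> i = j.
Proof.
case/imsetP => S; rewrite finset.inE => sS -> sB; apply/eqP; apply/negPn/negP => ij.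
have : B i \subset T i.
  apply/subsetP => x xi; have := subsetP sB x xi; rewrite finset.inE => /orP[xj|xS].
    by have := block_unique xi xj => e; rewrite e eqxx in ij.
  by apply: marked_in_block => //; have /setDP[] := subsetP sS x xS.
by move/subset_leq_card; rewrite card_B card_T leqNgt s_lt_k.
Qed.

Lemma layers_disjoint i j : i != j -> [disjoint layer i & layer j].
Proof.
move=> ij; apply/pred0P => A /=; apply/negP => /andP[Ai Aj].
have : B i \subset A by case/imsetP: Ai => S _ ->; apply: finset.subsetUl.
by move/(layer_block Aj) => e; rewrite e eqxx in ij.
Qed.

Lemma card_F_ge : m * 2 ^ (s * m.-1) <= #|F|.
Proof.
have -> : m * 2 ^ (s * m.-1) = #|\bigcup_j layer j|.
  rewrite card_bigcup_disjoint ?index_enum_uniq //; last first.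
    by move=> i j _ _; apply: layers_disjoint.
  rewrite (eq_bigr (fun=> 2 ^ (s * m.-1))); last by move=> j _; rewrite card_layer.
  by rewrite sum_nat_const card_ord.
by apply: subset_leq_card; apply/bigcupsP => j _; exact: layer_sub_F.
Qed.

(* Upper bound: an admissible set is determined by its traces on the blocks; the trace
   on a block is the whole block or a subset of its marked points.  Prescribing that the
   blocks of [C] are contained leaves at most [2^s + 1] choices for each other block. *)
Definition trace_choices (C : {set 'I_m}) (j : 'I_m) : {set {set X}} :=
  if j \in C then [set B j] else B j |: powerset (T j).

Lemma card_F_containing (C : {set 'I_m}) :
  #|[set A in F | [forall j in C, B j \subset A]]| <= (2 ^ s).+1 ^ #|~: C|.
Proof.
set S := [set A in F | _].
pose trace (A : {set X}) : {ffun 'I_m -> {set X}} := [ffun j => A :&: B j].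
have trace_inj : {in S &, injective trace}.
  move=> A A' _ _ e; apply/setP => x; have [j xj] := block_of x.
  have := congr1 (fun f : {ffun 'I_m -> {set X}} => x \in f j) e.
  by rewrite /trace !ffunE !finset.inE xj !andbT.
rewrite -(card_in_imset trace_inj).
have sub : trace @: S \subset family (trace_choices C).
  apply/subsetP => f /imsetP[A]; rewrite finset.inE => /andP[AF /forall_inP hC] ->.
  apply/familyP => j; rewrite /trace ffunE /trace_choices.
  have /andP[_ /forallP /(_ j)] := F_admissible AF.
  case: (boolP (j \in C)) => jC.
    by rewrite finset.inE (finset.setIidPr (hC j jC)).
  case/orP => [h|h]; first by rewrite (finset.setIidPr h) !finset.inE eqxx.
  by rewrite !finset.inE h orbT.
apply: leq_trans (subset_leq_card sub) _.
rewrite card_family foldrE big_map big_enum /=.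
apply: leq_trans (leq_prod (E2 := fun j => if j \in C then 1 else (2 ^ s).+1) _) _.
  move=> j _; rewrite /trace_choices; case: (j \in C); first by rewrite cards1.
  by rewrite cardsU1 card_powerset card_T; case: (_ \notin _); rewrite ?add1n ?add0n ?leqnSn.
rewrite -prod_nat_const [in X in _ <= X]big_mkcond /=.
by apply/eq_leq; apply: eq_bigr => j _; rewrite finset.inE; case: (j \in C).
Qed.

Hypothesis m_gt1 : 1 < m.
Hypothesis k_large : m * (m * s) <= k.
Hypothesis card_X : #|X| = k * m.

Let F' := F :|: coatoms X.

Lemma F'_union_closed : union_closed F'.
Proof. exact: union_closed_coatoms (uc_gen_closed G) (setT_in_F (ltnW m_gt1)). Qed.

Lemma F'_member A : A \in F' -> A != finset.set0 /\ m * #|A :&: Tall| <= #|A|.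
Proof.
move=> AF; have k_le : k <= #|A|.
  case/setUP: AF => [/F_admissible/admissible_card //|/imsetP[j _ ->]].
  by rewrite card_coatom card_X; have := m_gt1; nia.
split; first by rewrite -card_gt0; apply: leq_trans k_le; apply: leq_ltn_trans s_lt_k.
apply: leq_trans k_le; apply: leq_trans k_large; rewrite leq_mul2l -card_Tall.
by rewrite (subset_leq_card (subsetIr _ _)) orbT.
Qed.

(* The coatoms add at most [km] sets to the trace bound for [F]. *)
Lemma card_F'_bounds :
  m * 2 ^ (s * m.-1) <= #|F'| <= (2 ^ s).+1 ^ m + k * m.
Proof.
apply/andP; split; first exact: leq_trans card_F_ge (subset_leq_card (finset.subsetUl _ _)).
apply: leq_trans (leq_card_setU _ _) _; apply: leq_add; last by rewrite -card_X card_coatoms.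
have := card_F_containing finset.set0; rewrite finset.setC0 cardsT card_ord; apply: leq_trans.
apply/subset_leq_card/subsetP => A AF; rewrite finset.inE AF /=.
by apply/forall_inP => j; rewrite finset.inE.
Qed.

(* An unmarked point lies in every set of its block's layer, and every set of [F]
   containing it contains its block. *)
Lemma unmarked_count_bounds x : x \notin Tall ->
  2 ^ (s * m.-1) <= #|[set A in F' | x \in A]| <= (2 ^ s).+1 ^ m.-1 + k * m.
Proof.
move=> xT; have [j xj] := block_of x; apply/andP; split.
  rewrite -(card_layer j); apply/subset_leq_card/subsetP => A AL.
  rewrite !finset.inE (subsetP (layer_sub_F j)) //=.
  by case/imsetP: AL => S _ ->; rewrite finset.inE xj.
have sub : [set A in F' | x \in A] \subset
    [set A in F | [forall i in [set j], B i \subset A]] :|: coatoms X.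
  apply/subsetP => A; rewrite !finset.inE => /andP[/orP[AF|Ac] xA]; last by rewrite Ac orbT.
  rewrite AF /=; apply/orP; left; apply/forall_inP => i; rewrite finset.inE => /eqP ->.
  exact: admissible_unmarked (F_admissible AF) xA xT xj.
apply: leq_trans (subset_leq_card sub) _; apply: leq_trans (leq_card_setU _ _) _.
apply: leq_add; last by rewrite -card_X card_coatoms.
by have := card_F_containing [set j]; rewrite cardsC1 card_ord.
Qed.

Lemma AOD_F'_bounds (R : realFieldType) :
  ((((2 ^ (s * m.-1))%:R / #|F'|%:R) / 2 : R) <= AOD R F' <=
   m%:R^-1 + ((2 ^ s).+1 ^ m.-1 + k * m)%:R / #|F'|%:R)%R.
Proof.
have F'_gt0 : 0 < #|F'|.
  have /andP[+ _] := card_F'_bounds; apply: leq_trans.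
  by rewrite muln_gt0 expn_gt0 (ltnW m_gt1).
have hFr : (0 < #|F'|%:R :> R)%R by rewrite ltr0n.
apply: AOD_between => // [|A /F'_member[A0 A_sparse]].
  by apply/negP => /F'_member[]; rewrite eqxx.
apply: mean_abundance_bounds m_gt1 A0 A_sparse _ _ _; rewrite ?divr_ge0 ?ler0n //.
move=> x /unmarked_count_bounds /andP[lo hi]; rewrite /abundance.
by rewrite !ler_pM2r ?invr_gt0 // !ler_nat lo hi.
Qed.

Lemma construction_properties (R : realFieldType) :
  [/\ union_closed F', separates F',
      m * 2 ^ (s * m.-1) <= #|F'| <= (2 ^ s).+1 ^ m + k * m &
      ((((2 ^ (s * m.-1))%:R / #|F'|%:R) / 2 : R) <= AOD R F' <=
       m%:R^-1 + ((2 ^ s).+1 ^ m.-1 + k * m)%:R / #|F'|%:R)%R].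
Proof.
split; [exact: F'_union_closed | exact: separates_coatoms | exact: card_F'_bounds |].
exact: AOD_F'_bounds.
Qed.

End BlockConstruction.

Local Open Scope ring_scope.

Lemma shifted_pow_le (R : realFieldType) (a : R) (r : nat) : 0 <= a ->
  (a + 1) ^+ r * (a - r%:R) <= a ^+ r.+1.
Proof.
move=> ha; elim: r => [|r IH]; first by rewrite !expr0 expr1 mul1r subr0.
have hp : 0 <= (a + 1) ^+ r by apply: exprn_ge0; lra.
rewrite exprS [X in _ <= X]exprS -mulrA.
have step : (a + 1) * (a - r.+1%:R) <= a * (a - r%:R).
  rewrite -addn1 natrD; have : 0 <= r%:R :> R by rewrite ler0n. nra.
apply: le_trans (_ : (a + 1) ^+ r * (a * (a - r%:R)) <= _).
  by rewrite mulrCA; apply: ler_wpM2l.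
by rewrite mulrCA; apply: ler_wpM2l.
Qed.

Lemma pow_succ_le (R : realFieldType) (a : R) (r : nat) : 0 < a -> 2 * r%:R <= a ->
  (a + 1) ^+ r <= 2 * a ^+ r.
Proof.
move=> ha hr; have := shifted_pow_le r (ltW ha); rewrite exprS.
have hX : 0 <= (a + 1) ^+ r by apply: exprn_ge0; lra.
set X := (a + 1) ^+ r; set Y := a ^+ r => h.
have h3 : 0 <= X * (a - 2 * r%:R) by apply: mulr_ge0 => //; lra.
have : a * (X - 2 * Y) <= 0 by nra.
by rewrite pmulr_rle0 // subr_le0.
Qed.

Lemma log2_ge (R : realType) (x : R) (p : nat) : 0 < x -> 2 ^+ p <= x -> p%:R <= log2 x.
Proof.
move=> hx hp; have l2 : 0 < ln (2 : R) by apply: ln_gt0; lra.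
rewrite /log2 ler_pdivlMr // mulr_natl -lnXn //.
by rewrite ler_ln // posrE // exprn_gt0.
Qed.

Lemma log2_le (R : realType) (x : R) (p : nat) : 0 < x -> x <= 2 ^+ p -> log2 x <= p%:R.
Proof.
move=> hx hp; have l2 : 0 < ln (2 : R) by apply: ln_gt0; lra.
rewrite /log2 ler_pdivrMr // mulr_natl -lnXn //.
by rewrite ler_ln // posrE // exprn_gt0.
Qed.

Section Asymptotics.
Variables (R : realType) (m : nat).
Hypothesis m_ge8 : (8 <= m)%N.

Let u := up_log 2 m.
Let s := (u + 2)%N.
Let N := (2 ^ (s * m.-1))%N.

Lemma up_log_facts : [/\ (2 ^ u.-1 < m)%N, (m <= 2 ^ u)%N, (2 <= u)%N & (u <= m.-1)%N].
Proof.
have lower := up_log_gtn (isT : (1 < 2)%N) (leq_trans (isT : (1 < 8)%N) m_ge8).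
have upper := up_logP m (isT : (1 < 2)%N).
have u_ge2 : (2 <= u)%N.
  rewrite /u; case: (up_log 2 m) upper => [|[|v]] //= h; move: h; rewrite ?expn0 ?expn1; lia.
rewrite -/u in lower upper; have := ltn_expl u.-1 (isT : (1 < 2)%N).
split => //; lia.
Qed.

(* Hence [2^s = 4 2^u] is between [4m] and [8m]. *)
Lemma pow_s_bounds : (4 * m <= 2 ^ s)%N /\ (2 ^ s <= 8 * m)%N.
Proof.
have [lower upper u_ge2 _] := up_log_facts.
have pow_u : (2 ^ u = 2 * 2 ^ u.-1)%N by rewrite -expnS prednK //; lia.
rewrite /s expnD pow_u (_ : 2 ^ 2 = 4)%N // in upper *; lia.
Qed.

(* The coatom contribution [k m = m^3 s] is negligible against [N]. *)
Lemma km_le_N : (m ^ 2 * s * m <= N)%N.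
Proof.
have [_ _ u_ge2 u_le] := up_log_facts; have [four_m _] := pow_s_bounds.
have e0 : (m ^ 2 * s * m <= (4 * m) ^ 4)%N by rewrite /s !expnS !expn0; nia.
have e1 : ((4 * m) ^ 4 <= (4 * m) ^ m.-1)%N by apply: leq_pexp2l; lia.
have e2 : ((4 * m) ^ m.-1 <= (2 ^ s) ^ m.-1)%N by rewrite leq_exp2r //; lia.
by rewrite /N expnM; apply: leq_trans e0 (leq_trans e1 e2).
Qed.

(* The trace counts are comparable to [N]: [(2^s + 1)^m <= 16 m N] and
   [(2^s + 1)^(m-1) <= 2N], both by [pow_succ_le] with [a = 2^s >= 4m]. *)
Lemma trace_count_bounds :
  ((2 ^ s).+1 ^ m)%:R <= 16 * m%:R * N%:R :> R /\ ((2 ^ s).+1 ^ m.-1)%:R <= 2 * N%:R :> R.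
Proof.
have [a_ge a_le] := pow_s_bounds.
have ha4 : 4 * m%:R <= (2 ^ s)%:R :> R by rewrite -natrM ler_nat.
have ha8 : (2 ^ s)%:R <= 8 * m%:R :> R by rewrite -natrM ler_nat.
have hm : 8 <= m%:R :> R by rewrite (ler_nat R 8 m).
have hm1 : (m.-1%:R : R) <= m%:R by rewrite ler_nat; lia.
have hN : N%:R = (2 ^ s)%:R ^+ m.-1 :> R by rewrite /N expnM natrX.
have hN0 : 0 <= N%:R :> R by rewrite ler0n.
have pow_m1 : ((2 ^ s).+1 ^ m.-1)%:R <= 2 * N%:R :> R.
  by rewrite natrX -addn1 natrD hN; apply: pow_succ_le; lra.
have a_pow : (2 ^ s)%:R ^+ m = (2 ^ s)%:R * N%:R :> R.
  by rewrite hN -exprS prednK //; lia.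
split => //; rewrite natrX -addn1 natrD.
apply: le_trans (pow_succ_le _ _) _; [lra | lra | rewrite a_pow; nra].
Qed.

(* From now on [Fc] stands for [|F'|], with the bounds of [card_F'_bounds]. *)
Variable Fc : nat.
Hypothesis Fc_ge : (m * N <= Fc)%N.
Hypothesis Fc_le : (Fc <= (2 ^ s).+1 ^ m + m ^ 2 * s * m)%N.

Lemma card_real_bounds : m%:R * N%:R <= (Fc%:R : R) <= 17 * m%:R * N%:R.
Proof.
have [pow_m _] := trace_count_bounds.
have kmN : (m ^ 2 * s * m)%:R <= N%:R :> R by rewrite ler_nat km_le_N.
have hm : 8 <= m%:R :> R by rewrite (ler_nat R 8 m).
have hN : 0 <= N%:R :> R by rewrite ler0n.
apply/andP; split; first by rewrite -natrM ler_nat.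
apply: le_trans (_ : ((2 ^ s).+1 ^ m + m ^ 2 * s * m)%:R <= _); first by rewrite ler_nat.
by rewrite natrD; nra.
Qed.

Lemma AOD_order (v : R) :
  (N%:R / Fc%:R) / 2 <= v ->
  v <= m%:R^-1 + ((2 ^ s).+1 ^ m.-1 + m ^ 2 * s * m)%:R / Fc%:R ->
  m%:R^-1 / 34 <= v <= 4 * m%:R^-1.
Proof.
move=> lo hi; have /andP[F_ge F_le] := card_real_bounds.
have [_ pow_m1] := trace_count_bounds.
have kmN : (m ^ 2 * s * m)%:R <= N%:R :> R by rewrite ler_nat km_le_N.
have hm : 8 <= m%:R :> R by rewrite (ler_nat R 8 m).
have N_pos : 0 < N%:R :> R by rewrite ltr0n expn_gt0.
have F_pos : 0 < Fc%:R :> R by apply: lt_le_trans F_ge; apply: mulr_gt0 => //; lra.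
set iM := m%:R^-1 in hi *.
have iM_pos : 0 < iM by rewrite invr_gt0; lra.
have hiM : m%:R * iM = 1 by rewrite mulfV //; lra.
apply/andP; split.
  apply: le_trans lo; rewrite ler_pdivlMr // ler_pdivlMr //.
  have := ler_wpM2l (ltW iM_pos) F_le; nra.
apply: le_trans hi _.
suff : ((2 ^ s).+1 ^ m.-1 + m ^ 2 * s * m)%:R / Fc%:R <= 3 * iM by lra.
rewrite ler_pdivrMr // natrD.
have := ler_wpM2l (ltW iM_pos) F_ge; nra.
Qed.

Lemma log2_card_bounds : (s * m.-1)%:R <= log2 (Fc%:R : R) <= (s * m.-1 + u + 5)%:R.
Proof.
have /andP[F_ge F_le] := card_real_bounds.
have [_ upper _ _] := up_log_facts.
have hm : 8 <= m%:R :> R by rewrite (ler_nat R 8 m).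
have N_pos : 0 < N%:R :> R by rewrite ltr0n expn_gt0.
have F_pos : 0 < Fc%:R :> R by apply: lt_le_trans F_ge; apply: mulr_gt0 => //; lra.
have hN : N%:R = 2 ^+ (s * m.-1) :> R by rewrite /N natrX.
apply/andP; split.
  apply: log2_ge => //; rewrite -hN; apply: le_trans F_ge; rewrite ler_peMl //; lra.
apply: log2_le => //; apply: le_trans F_le _.
have m_le : 17 * m%:R <= 32 * (2 ^ u)%:R :> R.
  by rewrite -(natrM R 17) -(natrM R 32) ler_nat; lia.
have e32 : (2 : R) ^+ 5 = 32 by rewrite !exprS expr0; lra.
rewrite -addnA exprD -hN [X in _ <= X]mulrC ler_pM2r // exprD e32.
by rewrite natrX in m_le; lra.
Qed.

Lemma loglog_ratio_bounds :
  m%:R^-1 / 9 <= log2 (log2 (Fc%:R : R)) / log2 Fc%:R <= 4 * m%:R^-1.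
Proof.
have /andP[L_ge L_le] := log2_card_bounds.
have [lower upper u_ge2 u_le] := up_log_facts.
set L := log2 Fc%:R in L_ge L_le *.
have L_pos : 0 < L.
  apply: lt_le_trans L_ge; rewrite ltr0n muln_gt0; apply/andP; split; rewrite /s; lia.
have ll_ge : (u.-1)%:R <= log2 L.
  apply: log2_ge => //; apply: le_trans L_ge; rewrite -natrX ler_nat; nia.
have ll_le : log2 L <= (2 * s)%:R.
  apply: log2_le => //; apply: le_trans L_le _; rewrite -natrX ler_nat.
  have e : (2 ^ (2 * s) = 16 * (2 ^ u) ^ 2)%N.
    by rewrite /s mulnDr expnD mulnC expnM (mulnC 2 u) expnM.
  have : (m ^ 2 <= (2 ^ u) ^ 2)%N by rewrite leq_exp2r.
  rewrite e; nia.
have hm : 8 <= m%:R :> R by rewrite (ler_nat R 8 m).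
set iM := m%:R^-1.
have iM_pos : 0 < iM by rewrite invr_gt0; lra.
have hiM : m%:R * iM = 1 by rewrite mulfV //; lra.
apply/andP; split.
  rewrite ler_pdivlMr //.
  have e_le : (s * m.-1 + u + 5)%:R <= 9 * m%:R * (u.-1)%:R :> R.
    by rewrite -(natrM R 9) -natrM ler_nat /s; nia.
  have := ler_wpM2l (ltW iM_pos) e_le; have := ler_wpM2l (ltW iM_pos) L_le; nra.
rewrite ler_pdivrMr //.
have s_le : (2 * s)%:R * m%:R <= 4 * (s * m.-1)%:R :> R.
  by rewrite -natrM -(natrM R 4) ler_nat /s; nia.
have := ler_wpM2l (ltW iM_pos) s_le; have := ler_wpM2l (_ : 0 <= 4 * iM) L_ge; nra.
Qed.

Lemma AOD_vs_loglog_ratio (v : R) :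
  (N%:R / Fc%:R) / 2 <= v ->
  v <= m%:R^-1 + ((2 ^ s).+1 ^ m.-1 + m ^ 2 * s * m)%:R / Fc%:R ->
  136^-1 * (log2 (log2 Fc%:R) / log2 Fc%:R) <= v /\
  v <= 36 * (log2 (log2 Fc%:R) / log2 Fc%:R).
Proof.
move=> lo hi; have /andP[v_ge v_le] := AOD_order lo hi.
have /andP[r_ge r_le] := loglog_ratio_bounds.
split; [apply: le_trans v_ge | apply: le_trans v_le _]; lra.
Qed.

End Asymptotics.

Theorem mainTheorem5 (R : realType) :
  exists (c C : R) (m0 : nat), 0 < c /\ 0 < C /\
  forall m : nat, (m0 <= m)%N ->
  let s := (up_log 2 m + 2)%N in
  let k := (m ^ 2 * s)%N in
  forall (B T : 'I_m -> {set 'I_(k * m)}),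
    (forall i, #|B i| = k) ->
    (forall i j, i != j -> [disjoint B i & B j]) ->
    \bigcup_i B i = [set: 'I_(k * m)] ->
    (forall i, T i \subset B i) ->
    (forall i, #|T i| = s) ->
  let Tall := \bigcup_i T i in
  let F := uc_gen [set B i :|: [set t] | i in [set: 'I_m], t in Tall] in
  let F' := F :|: [set [set: 'I_(k * m)] :\ j | j : 'I_(k * m)] in
  union_closed F' /\ separates F' /\
  c * (log2 (log2 (#|F'|%:R)) / log2 (#|F'|%:R)) <= AOD R F' /\
  AOD R F' <= C * (log2 (log2 (#|F'|%:R)) / log2 (#|F'|%:R)).
Proof.
exists 136^-1, 36, 8%N; split; first by rewrite invr_gt0.
split => // m m_ge8 s k B T card_B disjoint_B cover_B T_sub_B card_T Tall F F'.
have m_gt1 : (1 < m)%N by apply: leq_trans m_ge8.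
have s_gt0 : (0 < s)%N by rewrite /s addn2.
have s_lt_k : (s < k)%N by rewrite /k; nia.
have k_large : (m * (m * s) <= k)%N by rewrite /k mulnA mulnn.
have [F'_closed F'_sep /andP[F'_ge F'_le] /andP[lo hi]] :=
  construction_properties card_B disjoint_B cover_B T_sub_B card_T s_gt0 s_lt_k
    m_gt1 k_large (card_ord (k * m)) R.
do 2!split => //.
exact: (@AOD_vs_loglog_ratio R m m_ge8 #|F'| F'_ge F'_le _ lo hi).
Qed.
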